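(* Let $\mathcal{S}=(Q,E,\delta,Q_0,\Sigma,\ell)$ be a labeled finite-state automaton, $Q_S\subset Q$ a set of secret states, and $K$ a positive integer with $K>2^{|Q\setminus Q_S|}-2$. Then $\mathcal{S}$ is strongly infinite-step opaque with respect to $Q_S$ if and only if $\mathcal{S}$ is strongly $K$-step opaque with respect to $Q_S$.
   Context: A labeled finite-state automaton is $\mathcal{S}=(Q,E,\delta,Q_0,\Sigma,\ell)$ with finite state set $Q$, finite event alphabet $E$, transition relation $\delta\subset Q\times E\times Q$, initial states $Q_0\subset Q$, finite output alphabet $\Sigma$, and labeling $\ell:E\to\Sigma\cup\{\epsilon\}$ ($\epsilon$ the empty word), extended morphically to event words. A run $q\xrightarrow{s}q'$ ($s\in E^*$) is a sequence of transitions from $q$ to $q'$ reading $s$. A run is non-secret if none of its states (including first and last) lies in $Q_S$. Strong infinite-step opacity: $\mathcal{S}$ is strongly infinite-step opaque w.r.t. $Q_S$ if for every run $q_0\xrightarrow{s_1}q_1\xrightarrow{s_2}q_2$ with $q_0\in Q_0$ and $q_1\in Q_S$ there is a non-secret run $q_0'\xrightarrow{s_1'}q_1'\xrightarrow{s_2'}q_2'$ with $q_0'\in Q_0$, $\ell(s_1)=\ell(s_1')$, $\ell(s_2)=\ell(s_2')$. Strong $K$-step opacity ($K$ a positive integer): the same requirement imposed only on runs with $|\ell(s_2)|\le K$. *)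

From mathcomp Require Import all_boot.
Set Implicit Arguments. Unset Strict Implicit. Unset Printing Implicit Defensive.

(* A labeled finite-state automaton S = (Q, E, delta, Q0, Sigma, ell).
   The label function ell : E -> Sigma u {eps} is encoded as E -> option Sigma,
   None standing for the empty word eps. *)
Record LFSA := {
  state : finType;
  event : finType;
  output : finType;
  delta : state -> event -> state -> bool;
  init : {set state};
  lab : event -> option output
}.

Section Runs.
Variable S : LFSA.

Definition labw (s : seq (event S)) : seq (output S) := pmap (@lab S) s.

(* is_run q s qs q' : q --s--> q' is a run whose successive states
   (after q) are qs; so the states of the run are q :: qs. *)
Fixpoint is_run (q : state S) (s : seq (event S)) (qs : seq (state S))
    (q' : state S) : bool :=
  match s, qs with
  | [::], [::] => q == q'
  | e :: s', p :: qs' => delta q e p && is_run p s' qs' q'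
  | _, _ => false
  end.

Definition non_secret (QS : {set state S}) (q : state S) (qs : seq (state S)) :=
  all (fun p => p \notin QS) (q :: qs).

Definition covered (QS : {set state S}) (s1 s2 : seq (event S)) : Prop :=
  exists (q0' q1' q2' : state S) (s1' s2' : seq (event S)) (qs1 qs2 : seq (state S)),
    [/\ q0' \in init S, is_run q0' s1' qs1 q1', is_run q1' s2' qs2 q2',
        non_secret QS q0' (qs1 ++ qs2) &
        labw s1 = labw s1' /\ labw s2 = labw s2'].

Definition strongly_inf_step_opaque (QS : {set state S}) : Prop :=
  forall (q0 q1 q2 : state S) (s1 s2 : seq (event S)) (qs1 qs2 : seq (state S)),
    q0 \in init S -> is_run q0 s1 qs1 q1 -> is_run q1 s2 qs2 q2 -> q1 \in QS ->
    covered QS s1 s2.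

Definition strongly_K_step_opaque (QS : {set state S}) (K : nat) : Prop :=
  forall (q0 q1 q2 : state S) (s1 s2 : seq (event S)) (qs1 qs2 : seq (state S)),
    q0 \in init S -> is_run q0 s1 qs1 q1 -> is_run q1 s2 qs2 q2 -> q1 \in QS ->
    size (labw s2) <= K ->
    covered QS s1 s2.
End Runs.

From mathcomp Require Import all_boot boolp zify.
Set Implicit Arguments. Unset Strict Implicit. Unset Printing Implicit Defensive.

(* Decompose a violating run at its LAST secret state p: past p the run is
   non-secret, so it suffices to cover every word v that labels a non-secret
   continuation from p.  Take a shortest uncovered v and, for each cut point
   0 < k < |v|, the set of non-secret states from which the suffix of v after
   k can be read along a non-secret run.  Minimality forces these sets to be
   nonempty, proper and pairwise distinct subsets of Q \ QS (equal sets at two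
   cut points would let us excise the factor between them), so
   |v| - 1 <= 2^|Q \ QS| - 2 < K and v was covered by K-step opacity. *)

Lemma labw_cat (S : LFSA) (s1 s2 : seq (event S)) :
  labw (s1 ++ s2) = labw s1 ++ labw s2.
Proof. exact: pmap_cat. Qed.

Section Runs.
Variable S : LFSA.
Implicit Types (q m : state S) (s : seq (event S)) (qs : seq (state S)).

Lemma run_cat q1 q2 q3 s1 s2 qs1 qs2 :
  is_run q1 s1 qs1 q2 -> is_run q2 s2 qs2 q3 ->
  is_run q1 (s1 ++ s2) (qs1 ++ qs2) q3.
Proof.
elim: s1 q1 qs1 => [|e s IH] q1 [|p qs] //=; first by move/eqP->.
by case/andP=> -> /IH /[apply] ->.
Qed.

Lemma run_size q q' s qs : is_run q s qs q' -> size qs = size s.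
Proof. by elim: s q qs => [|e s IH] q [|p qs] //= /andP[_ /IH ->]. Qed.

Lemma run_last q q' s qs : is_run q s qs q' -> last q qs = q'.
Proof.
elim: s q qs => [|e s IH] q [|p qs] //=; first by move/eqP.
by case/andP=> _ /IH.
Qed.

Lemma run_split q q' s qs x y :
  is_run q s qs q' -> labw s = x ++ y ->
  exists s1 s2 qs1 qs2 m, [/\ qs = qs1 ++ qs2, is_run q s1 qs1 m,
     is_run m s2 qs2 q', labw s1 = x & labw s2 = y].
Proof.
elim: s q qs x => [|e s IH] q [|p qs] x //=.
  move=> q_q'; case: x => [|//] /= <-.
  by exists [::], [::], [::], [::], q; rewrite /= eqxx.
case/andP=> step run; case: x => [|o x] lab_s.
  by exists [::], (e :: s), [::], (p :: qs), q; rewrite /= eqxx step.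
have [x' [lab_e lab_s']] : exists x', labw [:: e] ++ x' = o :: x /\ labw s = x' ++ y.
  by move: lab_s; rewrite /labw /=; case: (lab e) => [o'|] /= => [[-> ->]|->]; eexists.
have [s1 [s2 [qs1 [qs2 [m [-> run1 run2 lab1 lab2]]]]]] := IH _ _ _ run lab_s'.
exists (e :: s1), s2, (p :: qs1), qs2, m; split=> //=; first by rewrite step run1.
by rewrite -lab_e -lab1 -labw_cat.
Qed.

End Runs.

Section NonSecretRuns.
Variables (S : LFSA) (QS : {set state S}).
Implicit Types (p q m r : state S) (x y : seq (output S)).

Definition ns_after p x r : Prop := exists s qs,
  [/\ is_run p s qs r, all (fun q => q \notin QS) qs & labw s = x].

Definition ns_reach q x m : Prop := q \notin QS /\ ns_after q x m.

Definition ns_word x : Prop := exists q0 m, q0 \in init S /\ ns_reach q0 x m.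

Lemma ns_after_cat p x m y r :
  ns_after p x m -> ns_after m y r -> ns_after p (x ++ y) r.
Proof.
move=> [s1 [qs1 [run1 ns1 <-]]] [s2 [qs2 [run2 ns2 <-]]].
by exists (s1 ++ s2), (qs1 ++ qs2); rewrite all_cat ns1 ns2 labw_cat (run_cat run1).
Qed.

Lemma ns_after_split p x y r :
  ns_after p (x ++ y) r -> exists m, ns_after p x m /\ ns_after m y r.
Proof.
move=> [s [qs [run ns lab_s]]].
have [s1 [s2 [qs1 [qs2 [m [def_qs run1 run2 lab1 lab2]]]]]] := run_split run lab_s.
move: ns; rewrite def_qs all_cat => /andP[ns1 ns2].
by exists m; split; [exists s1, qs1 | exists s2, qs2].
Qed.

Lemma ns_after_notin p x m :
  ns_after p x m -> (p \notin QS) || (x != [::]) -> m \notin QS.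
Proof.
move=> [s [qs [run ns <-]]]; rewrite -(run_last run).
case: qs run ns => [|q qs] run ns /=; last by move=> _; apply: (allP ns); exact: mem_last.
by move: (run_size run); case: s {run} => //= _; rewrite orbF.
Qed.

Lemma ns_reach_notin q x m : ns_reach q x m -> m \notin QS.
Proof. by move=> [q_ns after]; apply: ns_after_notin after _; rewrite q_ns. Qed.

Lemma ns_reach_split q x y r :
  ns_reach q (x ++ y) r -> exists m, ns_reach q x m /\ ns_reach m y r.
Proof.
move=> [q_ns /ns_after_split [m [after_x after_y]]].
by exists m; do !split=> //; apply: ns_after_notin after_x _; rewrite q_ns.
Qed.

Lemma covered_ns_word s1 s2 : covered QS s1 s2 <-> ns_word (labw s1 ++ labw s2).
Proof.
split.
  move=> [q0 [q1 [q2 [s1' [s2' [qs1 [qs2 [init0 run1 run2 /andP[q0_ns ns] [-> ->]]]]]]]]].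
  exists q0, q2; split=> //; split=> //; exists (s1' ++ s2'), (qs1 ++ qs2).
  by rewrite labw_cat (run_cat run1).
move=> [q0 [q2 [init0 /ns_reach_split [q1 [[q0_ns [s1' [qs1 [run1 ns1 lab1]]]]
          [_ [s2' [qs2 [run2 ns2 lab2]]]]]]]]].
exists q0, q1, q2, s1', s2', qs1, qs2; split=> //.
by rewrite /non_secret /= q0_ns all_cat ns1 ns2.
Qed.

Lemma run_last_secret q s qs q' :
  is_run q s qs q' -> has (mem QS) (q :: qs) ->
  exists a qa p y, [/\ is_run q a qa p, p \in QS, ns_after p y q' & labw s = labw a ++ y].
Proof.
elim: s q qs => [|e s IH] q [|p qs] //=.
  move=> /eqP <-; rewrite orbF => q_s.
  exists [::], [::], q, [::]; split; rewrite /= ?eqxx //.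
  by exists [::], [::]; rewrite /= eqxx.
case/andP=> step run; case: (boolP (has (mem QS) (p :: qs))) => [/(IH _ _ run)|ns visits].
  move=> [a [qa [p' [y [run_a p'_s after lab_s]]]]].
  exists (e :: a), (p :: qa), p', y; split=> //=; first by rewrite step.
  by rewrite lab_s; case: (lab e).
have q_s : q \in QS by move: visits; case: (q \in QS) => // /(negP ns).
exists [::], [::], q, (labw (e :: s)); split; rewrite /= ?eqxx //.
exists (e :: s), (p :: qs); split=> //=; first by rewrite step.
by rewrite -all_predC in ns.
Qed.

End NonSecretRuns.

Lemma card_nonempty_proper_subsets (T : finType) (A : {set T}) :
  #|[set X in powerset A | (X != set0) && (X != A)]| = 2 ^ #|A| - 2.
Proof.
have -> : [set X in powerset A | (X != set0) && (X != A)] = powerset A :\: [set set0; A].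
  by apply/setP => X; rewrite !inE negb_or andbC.
have sub2 : [set set0; A] \subset powerset A.
  by apply/subsetP => X; rewrite !inE => /orP[/eqP-> | /eqP->]; rewrite ?sub0set.
rewrite cardsD (setIidPr sub2) card_powerset cards2.
by case: eqP => [<-|_]; rewrite ?cards0.
Qed.

Section ShortestUncovered.
Variables (S : LFSA) (QS : {set state S}) (p r : state S) (u v : seq (output S)).
Hypothesis after_v : ns_after QS p v r.
Hypothesis uncovered : ~ ns_word QS (u ++ v).
Hypothesis shorter_covered :
  forall w r', size w < size v -> ns_after QS p w r' -> ns_word QS (u ++ w).

Definition suffix_sources k : {set state S} :=
  [set y | `[< exists z, ns_reach QS y (drop k v) z >]].

Lemma in_suffix_sources y k :
  y \in suffix_sources k <-> exists z, ns_reach QS y (drop k v) z.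
Proof. by rewrite inE asboolE. Qed.

Lemma cut_at k : 0 < k < size v ->
  exists m, ns_after QS p (take k v) m /\ ns_reach QS m (drop k v) r.
Proof.
case/andP=> k_gt0 k_lt.
have /ns_after_split [m [after_take after_drop]] : ns_after QS p (take k v ++ drop k v) r.
  by rewrite cat_take_drop.
exists m; do !split=> //.
by apply: ns_after_notin after_take _; rewrite -size_eq0 size_take k_lt -lt0n k_gt0 orbT.
Qed.

Lemma suffix_sources_blocked k q0 y :
  q0 \in init S -> ns_reach QS q0 (u ++ take k v) y -> y \notin suffix_sources k.
Proof.
move=> init0 [q0_ns after]; apply/negP => /in_suffix_sources [z [_ after_drop]].
apply: uncovered; exists q0, z; split=> //; split=> //.
by rewrite -(cat_take_drop k v) catA; apply: ns_after_cat after after_drop.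
Qed.

Lemma suffix_sources_nonempty_proper k : 0 < k < size v ->
  suffix_sources k \in [set X in powerset (~: QS) | (X != set0) && (X != ~: QS)].
Proof.
move=> k_cut; have [m [after_take reach_drop]] := cut_at k_cut.
rewrite !inE; apply/and3P; split.
- by apply/subsetP => y /in_suffix_sources [z [y_ns _]]; rewrite inE.
- by apply/set0Pn; exists m; apply/in_suffix_sources; exists r.
have /shorter_covered : size (take k v) < size v.
  by case/andP: k_cut => _ k_lt; rewrite size_take k_lt.
case/(_ _ after_take) => q0 [y [init0 reach]]; apply/eqP => sources_full.
move: (suffix_sources_blocked init0 reach).
by rewrite sources_full inE (ns_reach_notin reach).
Qed.

Lemma suffix_sources_inj k j :
  0 < k -> k < j -> j < size v -> suffix_sources k != suffix_sources j.
Proof.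
move=> k_gt0 k_lt_j j_lt; apply/eqP => same_sources.
have k_cut : 0 < k < size v by rewrite k_gt0 (ltn_trans k_lt_j j_lt).
have [m [after_take reach_drop]] := cut_at k_cut.
have [z [_ after_drop]] : exists z, ns_reach QS m (drop j v) z.
  by apply/in_suffix_sources; rewrite -same_sources; apply/in_suffix_sources; exists r.
have /shorter_covered : size (take k v ++ drop j v) < size v.
  rewrite size_cat size_take size_drop; case/andP: k_cut => _ ->; lia.
case/(_ _ (ns_after_cat after_take after_drop)) => q0 [w [init0]].
rewrite catA => /ns_reach_split [y [reach_take reach_rest]].
case/negP: (suffix_sources_blocked init0 reach_take).
by rewrite same_sources; apply/in_suffix_sources; exists w.
Qed.

Lemma shortest_uncovered_size : (size v).-1 <= 2 ^ #|~: QS| - 2.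
Proof.
pose f (i : 'I_(size v).-1) := suffix_sources i.+1.
have f_inj : injective f.
  move=> i j /eqP; apply: contraTeq => i_neq_j.
  have [i_lt j_lt] : i.+1 < size v /\ j.+1 < size v.
    by have := ltn_ord i; have := ltn_ord j; lia.
  case: (ltngtP i j) => [lt | lt | /val_inj ij]; last by rewrite ij eqxx in i_neq_j.
    exact: suffix_sources_inj.
  by rewrite eq_sym; apply: suffix_sources_inj.
rewrite -card_nonempty_proper_subsets -[(size v).-1]card_ord -(card_imset _ f_inj).
apply/subset_leq_card/subsetP => _ /imsetP[i _ ->].
by apply: suffix_sources_nonempty_proper; have := ltn_ord i; lia.
Qed.

End ShortestUncovered.

Lemma ns_after_covered (S : LFSA) (QS : {set state S}) (p : state S) u K :
  2 ^ #|~: QS| - 2 < K ->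
  (forall v r, ns_after QS p v r -> size v <= K -> ns_word QS (u ++ v)) ->
  forall v r, ns_after QS p v r -> ns_word QS (u ++ v).
Proof.
move=> K_large covered_upto_K v; have [n] := ubnP (size v).
elim: n v => // n IH v /ltnSE size_v r after_v.
have [|long] := leqP (size v) K; first exact: covered_upto_K after_v.
apply: contrapT => uncovered.
have shorter w r' (lt : size w < size v) := IH w (leq_trans lt size_v) r'.
by have := shortest_uncovered_size after_v uncovered shorter; lia.
Qed.

Theorem corollary4 (S : LFSA) (QS : {set state S}) (K : nat) :
  0 < K -> 2 ^ #|~: QS| < K + 2 ->
  (strongly_inf_step_opaque QS <-> strongly_K_step_opaque QS K).
Proof.
move=> K_gt0 K_large; split=> opaque q0 q1 q2 s1 s2 qs1 qs2 init0 run1 run2 q1_s.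
  by move=> _; exact: opaque init0 run1 run2 q1_s.
apply/covered_ns_word; rewrite -labw_cat.
have visits : has (mem QS) (q0 :: qs1 ++ qs2).
  by apply/hasP; exists q1; rewrite // -cat_cons mem_cat -(run_last run1) mem_last.
have [a [qa [p [y [run_a p_s after_y ->]]]]] :=
  run_last_secret (run_cat run1 run2) visits.
apply: (ns_after_covered (K := K)) after_y; first by have := expn_gt0 2 #|~: QS|; lia.
move=> v r [b [qb [run_b _ <-]]] short; apply/covered_ns_word.
exact: opaque init0 run_a run_b p_s short.
Qed.
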